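(* Let $V$ be a vector space of uncountable dimension over a field $\mathbb{F}$, and let $u$ be an endomorphism of $V$ with no dominant eigenvalue. Then $V^u$ has a good stratification.
   Context: A scalar $\lambda$ is a dominant eigenvalue of $u$ if $\operatorname{rk}(u-\lambda\,\mathrm{id}_V)<\dim V$. $V^u$ is the $\mathbb{F}[t]$-module with underlying space $V$ and $t\cdot x:=u(x)$. A stratification of a non-zero $\mathbb{F}[t]$-module $M$ is an increasing family $(M_\alpha)_{\alpha\in D}$ of submodules indexed by a well-ordered set $D$ such that each quotient $M_\alpha/\sum_{\beta<\alpha}M_\beta$ is non-zero and monogenous (cyclic), and $M=\sum_{\alpha\in D}M_\alpha$; its dimension sequence is $n_\alpha:=\dim_{\mathbb{F}}(M_\alpha/\sum_{\beta<\alpha}M_\beta)\in\mathbb{N}^*\cup\{+\infty\}$. It is good if (a) $n_\alpha\ge 2$ whenever $\alpha$ is the minimum of $D$ or the successor of some element of $D$, and (b) $D$ has no maximum. *)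

From HB Require Import structures.
From mathcomp Require Import all_boot all_order all_algebra.
From mathcomp Require Import boolp classical_sets cardinality.
Set Implicit Arguments. Unset Strict Implicit. Unset Printing Implicit Defensive.
Import Order.TTheory GRing.Theory.
Local Open Scope classical_set_scope.
Local Open Scope ring_scope.

Section LinAlg.
Variables (F : fieldType) (V : lmodType F).

Definition lin_indep (B : set V) : Prop :=
  forall (s : seq V) (c : V -> F), uniq s -> (forall v, v \in s -> B v) ->
    \sum_(v <- s) c v *: v = 0 -> forall v, v \in s -> c v = 0.

Definition span (B : set V) : set V :=
  [set x | exists (s : seq V) (c : V -> F),
     (forall v, v \in s -> B v) /\ x = \sum_(v <- s) c v *: v].

Definition basis_of (S B : set V) : Prop :=
  B `<=` S /\ lin_indep B /\ span B = S.

Definition dim_lt (S T : set V) : Prop :=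
  exists BS BT, basis_of S BS /\ basis_of T BT /\
     (BS #<= BT)%card /\ ~ (BT #<= BS)%card.

Definition uncountable_dim : Prop :=
  exists B, basis_of setT B /\ ~ countable B.

Definition dominant_eigenvalue (u : V -> V) (l : F) : Prop :=
  dim_lt (range (fun x => u x - l *: x)) setT.

(* action of a polynomial p on x in the F[t]-module V^u *)
Definition peval (u : V -> V) (p : {poly F}) (x : V) : V :=
  \sum_(i < size p) p`_i *: iter i u x.

Definition submodule (u : V -> V) (M : set V) : Prop :=
  M 0 /\ (forall x y, M x -> M y -> M (x + y)) /\
  (forall (a : F) x, M x -> M (a *: x)) /\ (forall x, M x -> M (u x)).

Section Strat.
Variables (d : Order.disp_t) (D : orderType d).

(* D is well-ordered (totality comes from orderType) *)
Definition well_ordered : Prop :=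
  forall A : set D, A !=set0 -> exists a, A a /\ forall b, A b -> (a <= b)%O.

Definition sumfam (M : D -> set V) (P : D -> Prop) : set V :=
  [set x | exists (s : seq D) (f : D -> V),
     (forall b, b \in s -> P b /\ M b (f b)) /\ x = \sum_(b <- s) f b].

Definition below (M : D -> set V) (a : D) : set V :=
  sumfam M (fun b => (b < a)%O).

Definition stratification (u : V -> V) (M : D -> set V) : Prop :=
  [/\ (forall a, submodule u (M a)),
      (forall a b, (a <= b)%O -> M a `<=` M b),
      (* quotient M a / below M a is non-zero *)
      (forall a, exists x, M a x /\ ~ below M a x),
      (* quotient M a / below M a is monogenous (cyclic F[t]-module) *)
      (forall a, exists x, M a x /\ forall y, M a y ->
          exists (p : {poly F}) n, below M a n /\ y = n + peval u p x)
    & sumfam M (fun _ => True) = setT].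

(* dim_F (M a / below M a) >= 2 *)
Definition qdim_ge2 (M : D -> set V) (a : D) : Prop :=
  exists x y, M a x /\ M a y /\
    forall c1 c2 : F, below M a (c1 *: x + c2 *: y) -> c1 = 0 /\ c2 = 0.

Definition is_min (a : D) : Prop := forall b, (a <= b)%O.
Definition is_succ (a : D) : Prop :=
  exists b, (b < a)%O /\ ~ exists c, (b < c)%O /\ (c < a)%O.

Definition good (M : D -> set V) : Prop :=
  (forall a, is_min a \/ is_succ a -> qdim_ge2 M a) /\
  (forall a : D, exists b, (a < b)%O).

End Strat.

Definition has_good_stratification (u : V -> V) : Prop :=
  exists (d : Order.disp_t) (D : orderType d) (M : D -> set V),
    well_ordered D /\ stratification u M /\ good M.

End LinAlg.

(* Let k be the dimension of V. As no eigenvalue is dominant, every u - l has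
   rank k. Hence a u-stable subspace N spanned by fewer than k vectors contains
   the range of no u - l, so u does not induce a scalar map on V/N: some x has
   x and u x linearly independent modulo N.
   The strata are indexed by D = X * nat, ordered lexicographically, where X is
   the set of finite words over an alphabet of order type k (an initial segment
   of V) ordered first by largest letter; then every proper initial segment of D
   has fewer than k elements, and words code a basis B of V. By transfinite
   recursion choose generators x_a and let M_a be the submodule generated by the
   x_b for b <= a. At a limit index (t, 0) add the basis vector coded by t, which
   makes the strata exhaustive; at every other index, in particular at the
   minimum and at successors, choose x_a with x_a and u x_a free modulo the
   earlier strata, so that the quotient has dimension at least 2. Each quotient
   is generated by x_a, and D has no maximum.
   Cardinalities are compared through sets of words instead of cardinal
   arithmetic: the words over S are closed under encoding finite lists of
   words. *)

From Pilot Require Import Defs.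
From HB Require Import structures.
From mathcomp Require Import all_boot all_order all_algebra.
From mathcomp Require Import boolp classical_sets cardinality.
From mathcomp Require Import finmap functions wochoice.
Set Implicit Arguments. Unset Strict Implicit. Unset Printing Implicit Defensive.
Import Order.TTheory GRing.Theory.

Local Open Scope classical_set_scope.
Local Open Scope ring_scope.

(** * Linear algebra *)

Lemma big_seq_partition (A : Type) (I : eqType) (W : nmodType) (l : seq A)
    (key : A -> I) (G : A -> W) (r : seq I) :
  uniq r -> all (fun q => key q \in r) l ->
  \sum_(q <- l) G q = \sum_(i <- r) \sum_(q <- l | key q == i) G q.
Proof.
move=> ur; elim: l => [|q l IH] /=.
  by move=> _; rewrite big_nil big1 // => i _; rewrite big_nil.
case/andP=> qr /IH; rewrite big_cons => ->.
under [RHS]eq_bigr do rewrite big_cons.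
rewrite [RHS](eq_bigr (fun i =>
  (if key q == i then G q else 0) + \sum_(j <- l | key j == i) G j)); last first.
  by move=> i _; case: (key q == i); rewrite ?add0r.
rewrite big_split /=; congr (_ + _).
rewrite (bigD1_seq (key q)) //= eqxx big1 ?addr0 // => i.
by rewrite eq_sym => /negbTE ->.
Qed.

Lemma big_seq_partition_undup (A : Type) (I : eqType) (W : nmodType) (l : seq A)
    (key : A -> I) (G : A -> W) :
  \sum_(q <- l) G q = \sum_(i <- undup (map key l)) \sum_(q <- l | key q == i) G q.
Proof.
apply: big_seq_partition; first exact: undup_uniq.
rewrite -(all_map key (fun i => i \in undup (map key l))).
by apply/allP => i; rewrite mem_undup.
Qed.

Section Subspaces.
Variables (F : fieldType) (V : lmodType F).

Definition subspace (S : set V) :=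
  [/\ S 0, forall x y, S x -> S y -> S (x + y) & forall (a : F) x, S x -> S (a *: x)].

Variable S : set V.
Hypothesis hS : subspace S.

Lemma subspace0 : S 0. Proof. by case: hS. Qed.
Lemma subspaceD x y : S x -> S y -> S (x + y). Proof. by case: hS => _ + _; apply. Qed.
Lemma subspaceZ a x : S x -> S (a *: x). Proof. by case: hS => _ _; apply. Qed.
Lemma subspaceN x : S x -> S (- x).
Proof. by rewrite -scaleN1r; apply: subspaceZ. Qed.
Lemma subspaceB x y : S x -> S y -> S (x - y).
Proof. by move=> Sx /subspaceN; apply: subspaceD. Qed.

Lemma subspace_sum (I : Type) (r : seq I) (P : pred I) (f : I -> V) :
  (forall i, P i -> S (f i)) -> S (\sum_(i <- r | P i) f i).
Proof. by move=> hf; apply: big_ind => //; [apply: subspace0|apply: subspaceD]. Qed.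

Lemma subspace_sum_seq (I : eqType) (r : seq I) (f : I -> V) :
  (forall i, i \in r -> S (f i)) -> S (\sum_(i <- r) f i).
Proof. by move=> hf; rewrite big_seq; apply: subspace_sum. Qed.

End Subspaces.

Section SpanFamily.
Variables (F : fieldType) (V : lmodType F) (Y : eqType) (G : Y -> V).

Definition span_fam (Z : set Y) : set V :=
  [set x | exists l : seq (F * Y), (forall q, q \in l -> Z q.2) /\
     x = \sum_(q <- l) q.1 *: G q.2].

Lemma span_fam_subspace Z : subspace (span_fam Z).
Proof.
split.
- by exists [::]; split => //; rewrite big_nil.
- move=> x y [l1 [h1 ->]] [l2 [h2 ->]]; exists (l1 ++ l2).
  split; last by rewrite big_cat.
  by move=> q; rewrite mem_cat => /orP[/h1|/h2].
- move=> a x [l [h ->]]; exists (map (fun q => (a * q.1, q.2)) l); split.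
    by move=> q /mapP[q' /h ? ->].
  by rewrite big_map scaler_sumr; apply: eq_bigr => q _; rewrite scalerA.
Qed.

Lemma span_fam_gen Z y : Z y -> span_fam Z (G y).
Proof.
move=> Zy; exists [:: (1, y)]; split; last by rewrite big_seq1 scale1r.
by move=> q; rewrite inE => /eqP ->.
Qed.

Lemma span_fam_min Z S : subspace S -> (forall y, Z y -> S (G y)) -> span_fam Z `<=` S.
Proof.
move=> hS hG x [l [hl ->]]; apply: subspace_sum_seq => // q /hl Zq.
by apply: subspaceZ => //; apply: hG.
Qed.

Lemma span_fam_mono Z Z' : Z `<=` Z' -> span_fam Z `<=` span_fam Z'.
Proof. by move=> ZZ' x [l [hl ->]]; exists l; split => // q /hl /ZZ'. Qed.

End SpanFamily.

Lemma eq_span_fam (F : fieldType) (V : lmodType F) (Y : eqType) (G1 G2 : Y -> V)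
    (Z : set Y) :
  (forall y, Z y -> G1 y = G2 y) -> span_fam G1 Z = span_fam G2 Z.
Proof.
move=> hG; apply/seteqP; split => x [l [hl ->]]; exists l; split => //;
  by apply: eq_big_seq => q /hl hq; rewrite hG.
Qed.

Section Span.
Variables (F : fieldType) (V : lmodType F).

Lemma spanE (B : set V) : Defs.span B = span_fam id B.
Proof.
apply/seteqP; split => x.
  move=> [s [c [hs ->]]]; exists (map (fun v => (c v, v)) s); split.
    by move=> q /mapP[v /hs ? ->].
  by rewrite big_map.
move=> [l [hl ->]]; exists (undup (map snd l)).
exists (fun v => \sum_(q <- l | q.2 == v) q.1); split.
  by move=> v; rewrite mem_undup => /mapP[q /hl ? ->].
rewrite (big_seq_partition_undup l snd); apply: eq_bigr => v _.
by rewrite scaler_suml; apply: eq_bigr => q /eqP ->.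
Qed.

Lemma span_subspace (B : set V) : subspace (Defs.span B).
Proof. by rewrite spanE; apply: span_fam_subspace. Qed.

Lemma span_gen (B : set V) x : B x -> Defs.span B x.
Proof. by rewrite spanE; apply: (span_fam_gen id). Qed.

Lemma span_min (B S : set V) : subspace S -> B `<=` S -> Defs.span B `<=` S.
Proof. by rewrite spanE; apply: span_fam_min. Qed.

Lemma lin_indep_subset (A B : set V) : lin_indep A -> B `<=` A -> lin_indep B.
Proof. by move=> hA BA s c us hs; apply: hA => // v /hs /BA. Qed.

Lemma lin_indep_setU1 (B : set V) x :
  lin_indep B -> ~ Defs.span B x -> lin_indep (B `|` [set x]).
Proof.
move=> hB nx s c us hs hsum.
have hB' v : v \in s -> v != x -> B v by move=> /hs [//| ->]; rewrite eqxx.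
have cx0 : x \in s -> c x = 0.
  move=> xs; apply: contrapT => /eqP cx; apply: nx.
  move: hsum; rewrite (bigD1_seq x) //= => /eqP; rewrite addr_eq0 => /eqP h.
  rewrite -[x](scalerK cx) h; apply: (subspaceZ (span_subspace B)).
  apply: (subspaceN (span_subspace B)); rewrite big_seq_cond.
  apply: (subspace_sum (span_subspace B)) => v /andP[vs vx].
  by apply: (subspaceZ (span_subspace B)); apply/span_gen/hB'.
have hsum' : \sum_(v <- filter (predC1 x) s) c v *: v = 0.
  rewrite big_filter; move: hsum; rewrite (bigID (pred1 x)) /=.
  rewrite big_seq_cond big1 ?add0r // => v /andP[vs /eqP vx].
  by rewrite vx cx0 ?scale0r // -vx.
move=> v vs; have [vx|vx] := eqVneq v x; first by rewrite vx cx0 // -vx.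
apply: (hB (filter (predC1 x) s) c) => //; first exact: filter_uniq.
  by move=> w; rewrite mem_filter => /andP[wx ws]; apply: hB'.
by rewrite mem_filter /= vx.
Qed.

End Span.

Lemma chain_cover_seq (T : eqType) (Fm : set (set T)) (A : set T) (s : seq T) :
  total_on Fm subset -> (forall v, v \in s -> (A `|` \bigcup_(X in Fm) X) v) ->
  exists X, (Fm X \/ X = set0) /\ forall v, v \in s -> (A `|` X) v.
Proof.
move=> tot; elim: s => [|a s IH] hs; first by exists set0; split; [right|].
have [|X [hX hXs]] := IH; first by move=> v vs; apply: hs; rewrite in_cons vs orbT.
have hcons (Y : set T) : X `<=` Y -> (A `|` Y) a ->
    forall v, v \in a :: s -> (A `|` Y) v.
  move=> XY Ya v; rewrite in_cons => /orP[/eqP->//|/hXs].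
  by case=> [?|/XY ?]; [left|right].
case: (hs a (mem_head _ _)) => [Aa|[Y FY Ya]].
  by exists X; split => //; apply: hcons => //; left.
case: hX hcons => [FX|->] hcons; last by exists Y; split; [left|apply: hcons => //; right].
case: (tot X Y FX FY) => [XY|YX]; first by exists Y; split; [left|apply: hcons => //; right].
by exists X; split; [left|apply: hcons => //; right; apply: YX].
Qed.

Section Bases.
Variables (F : fieldType) (V : lmodType F).

Lemma lin_indep_chain (I : set V) (Fm : set (set V)) :
  lin_indep I -> (forall X, Fm X -> lin_indep (I `|` X)) -> total_on Fm subset ->
  lin_indep (I `|` \bigcup_(X in Fm) X).
Proof.
move=> hI hF tot s c us hs.
have [X [[FX|->] hXs]] := chain_cover_seq tot hs; first exact: hF FX s c us hXs.
by rewrite setU0 in hXs; apply: hI.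
Qed.

Lemma basis_extend (S I : set V) : subspace S -> I `<=` S -> lin_indep I ->
  exists BS, Defs.basis_of S BS /\ I `<=` BS.
Proof.
move=> hS IS hI.
pose P X := X `<=` S /\ lin_indep (I `|` X).
have chainP (Fm : set (set V)) : Fm `<=` P -> total_on Fm subset ->
    P (\bigcup_(X in Fm) X).
  move=> FP tot; split; first by move=> x [X /FP[+ _]]; apply.
  by apply: lin_indep_chain => // X /FP[].
have [A [[AS hA] maxA]] := Zorn_bigcup chainP.
exists (I `|` A); split; last by move=> x Ix; left.
split; first by move=> x [/IS|/AS].
split => //; apply/seteqP; split; first by apply: span_min => // x [/IS|/AS].
move=> x Sx; apply: contrapT => nx; apply: (maxA (A `|` [set x])).
  split; first by move=> y Ay; left.
  by move=> /(_ x (or_intror erefl)) Ax; apply/nx/span_gen; right.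
split; first by move=> y [/AS|->].
by rewrite setUA; apply: lin_indep_setU1.
Qed.

Lemma lin_indep_size_le (s t : seq V) : uniq s -> uniq t -> lin_indep [set` t] ->
  (forall v, v \in t -> Defs.span [set` s] v) -> (size t <= size s)%N.
Proof.
move=> us ut hI hspan; rewrite leqNgt; apply/negP => hlt.
have rep (i : 'I_(size t)) : exists a : 'I_(size s) -> F,
    t`_i = \sum_(j < size s) a j *: s`_j.
  have := hspan (t`_i) (mem_nth 0 (ltn_ord i)); rewrite spanE => -[l [hl ->]].
  exists (fun j => \sum_(q <- l | q.2 == s`_j) q.1).
  rewrite (@big_seq_partition _ _ _ l snd (fun q => q.1 *: q.2) s us); last first.
    by apply/allP => q /hl.
  rewrite (big_nth 0) big_mkord; apply: eq_bigr => j _; rewrite scaler_suml.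
  by apply: eq_bigr => q /eqP ->.
have [a ha] := choice rep.
(* A nonzero vector in the left kernel of the coordinate matrix gives a relation
   among the vectors of [t]. *)
pose A := \matrix_(i < size t, j < size s) a i j.
have /existsP[i0 hi0] : [exists i0, row i0 (kermx A) != 0].
  have : kermx A != 0.
    rewrite -mxrank_eq0 mxrank_ker subn_eq0 -ltnNge.
    exact: leq_ltn_trans (rank_leq_col A) hlt.
  apply: contraNT => /existsPn H; apply/eqP/row_matrixP => i.
  by rewrite row0; apply/eqP/negbNE.
pose c := row i0 (kermx A).
have cA : c *m A = 0 by rewrite -row_mul mulmx_ker row0.
pose cf v := c 0 (insubd i0 (index v t)).
have cft (i : 'I_(size t)) : cf t`_i = c 0 i.
  rewrite /cf; congr (c 0 _); apply: val_inj.
  by rewrite insubdK ?index_uniq // unfold_in ltn_ord.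
have hsum : \sum_(v <- t) cf v *: v = 0.
  rewrite (big_nth 0) big_mkord.
  under eq_bigr => i _ do rewrite cft ha scaler_sumr.
  rewrite exchange_big /= big1 // => j _.
  have := congr1 (fun M : 'rV[F]_(size s) => M 0 j) cA; rewrite !mxE /= => h.
  rewrite -[RHS](scale0r s`_j) -h scaler_suml; apply: eq_bigr => i _.
  by rewrite scalerA /A mxE.
move: hi0; rewrite -/c => /eqP; apply; apply/rowP => j.
by rewrite [RHS]mxE -cft; apply: (hI t cf ut) => //; apply: mem_nth.
Qed.

Lemma lin_indep_finite (I : set V) (s : seq V) :
  lin_indep I -> I `<=` Defs.span [set` s] -> finite_set I.
Proof.
move=> hI hIs; apply: contrapT => /(infinite_set_fset (size (undup s)).+1)[Bf BfI cardB].
have := @lin_indep_size_le (undup s) Bf (undup_uniq s) (fset_uniq Bf).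
have -> : [set` undup s] = [set` s] by apply/seteqP; split => x /=; rewrite mem_undup.
move=> /(_ (lin_indep_subset hI BfI)) /(_ (fun v vB => hIs v (BfI v vB))).
by move/leq_ltn_trans/(_ cardB); rewrite ltnn.
Qed.

End Bases.

Section FreePairModulo.
Variables (F : fieldType) (V : lmodType F) (u : {linear V -> V}) (N : set V).
Hypotheses (hN : subspace N) (hNu : forall x, N x -> N (u x)).

(* [E x l]: [x] is an eigenvector for [l] of the map induced by [u] on [V/N]. *)
Let E x l := N (u x - l *: x).

Let E_N x l : N x -> E x l.
Proof. by move=> Nx; apply: subspaceB => //; [apply: hNu|apply: subspaceZ]. Qed.

Let ED x y l : E x l -> E y l -> E (x + y) l.
Proof. by move=> hx hy; rewrite /E linearD scalerDr opprD addrACA; apply: subspaceD. Qed.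

Let EZ x c l : E x l -> E (c *: x) l.
Proof.
by move=> hx; rewrite /E linearZ /= scalerA mulrC -scalerA -scalerBr; apply: subspaceZ.
Qed.

Let N_unscale c x : c != 0 -> N (c *: x) -> N x.
Proof. by move=> c0 /(subspaceZ hN c^-1); rewrite scalerK. Qed.

Let E_of_dependent x c1 c2 : ~ N x -> N (c1 *: x + c2 *: u x) ->
  ~ (c1 = 0 /\ c2 = 0) -> exists l, E x l.
Proof.
move=> nx hc nc; have [c20|c2n0] := eqVneq c2 0.
  move: hc nc; rewrite c20 scale0r addr0 => hc nc.
  have [c10|c1n0] := eqVneq c1 0; first by case: nc.
  by case: nx; apply: N_unscale hc.
exists (- (c1 / c2)); apply: (N_unscale c2n0).
by rewrite scalerBr scalerA mulrN mulrCA divff // mulr1 scaleNr opprK addrC.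
Qed.

Let E_sum x y lx ly lz : E x lx -> E y ly -> E (x + y) lz ->
  N ((lx - lz) *: x + (ly - lz) *: y).
Proof.
have shift z l m : u z - m *: z = (u z - l *: z) + (l - m) *: z.
  by rewrite scalerBl addrA subrK.
move=> hx hy; rewrite /E linearD scalerDr opprD addrACA (shift x lx) (shift y ly).
rewrite addrACA; set a := _ + (u y - _) => hz.
by have := subspaceB hN hz (subspaceD hN hx hy); rewrite addrAC subrr add0r.
Qed.

Lemma exists_free_pair_mod : ~ (exists l, forall x, N (u x - l *: x)) ->
  exists x, forall c1 c2 : F, N (c1 *: x + c2 *: u x) -> c1 = 0 /\ c2 = 0.
Proof.
move=> nex; apply: contrapT => nfree.
have eigen x : ~ N x -> exists l, E x l.
  move=> nx; apply: contrapT => nE; apply: nfree; exists x => c1 c2 hc.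
  by apply: contrapT => nc; apply: nE; apply: E_of_dependent hc nc.
have [x0 nx0] : exists x0, ~ N x0.
  apply: contrapT => allN; apply: nex; exists 0 => x; rewrite scale0r subr0.
  by apply: hNu; apply: contrapT => nx; apply: allN; exists x.
have [l0 hl0] := eigen x0 nx0; apply: nex; exists l0 => y.
(* Compare the eigenvalues at [x0], [y] and [x0 + y]. *)
have [Ny|ny] := pselect (N y); first exact: E_N.
have [ly hly] := eigen y ny; have [<-|lyl0] := eqVneq ly l0; first exact: hly.
have [Nz|nz] := pselect (N (x0 + y)).
  have -> : y = (-1) *: x0 + (x0 + y) by rewrite scaleN1r addKr.
  by apply: ED; [apply: EZ|apply: E_N].
have [lz hlz] := eigen _ nz; have hw := E_sum hl0 hly hlz.
have [lylz|lylz] := eqVneq ly lz.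
  case: nx0; apply: (@N_unscale (l0 - lz)); first by rewrite subr_eq0 -lylz eq_sym.
  by move: hw; rewrite lylz subrr scale0r addr0.
have -> : y = (ly - lz)^-1 *: ((l0 - lz) *: x0 + (ly - lz) *: y)
    + (- ((ly - lz)^-1 * (l0 - lz))) *: x0.
  by rewrite scalerDr !scalerA mulVf ?subr_eq0 // scale1r scaleNr addrAC subrr add0r.
by apply: ED; [apply/E_N/(subspaceZ hN)|apply: EZ].
Qed.

End FreePairModulo.

(** * Counting independent vectors *)

Lemma card_le_inj_on (T U : Type) (A : set T) (B : set U) (f : T -> U) :
  (forall x, A x -> B (f x)) -> (forall x y, A x -> A y -> f x = f y -> x = y) ->
  (A #<= B)%card.
Proof.
move=> hf hi; have [g] : $|{injfun A >-> B}|.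
  apply/injfunPex; exists f; first by move=> x; apply: hf.
  by move=> x y /set_mem Ax /set_mem Ay; apply: hi.
exact: inj_card_le g.
Qed.

Lemma card_le_inj_onP (T U : Type) (A : set T) (B : set U) (u0 : U) :
  (A #<= B)%card -> exists f : T -> U,
    (forall x, A x -> B (f x)) /\ (forall x y, A x -> A y -> f x = f y -> x = y).
Proof.
move=> /card_leP [g].
exists (fun x => if pselect (A x) is left h then \val (g (exist _ x (mem_set h))) else u0).
split=> [x Ax|x y Ax Ay]; case: pselect => // hx.
  exact: set_valP (g (exist _ x (mem_set hx))).
case: pselect => // hy e.
by have := congr1 val (injT (val_inj e)).
Qed.

(* For infinite [Z], [tagged_seqs Z] has the cardinality of [Z]. *)
Definition tagged_seqs (Y : eqType) (Z : set Y) : set (seq Y * nat) :=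
  [set p | forall y, y \in p.1 -> Z y].

Lemma span_fam_seq (F : fieldType) (V : lmodType F) (Y : eqType) (G : Y -> V)
    (s : seq Y) :
  span_fam G [set` s] `<=` Defs.span [set` map G s].
Proof.
rewrite spanE => x [l [hl ->]]; exists (map (fun q => (q.1, G q.2)) l).
split; last by rewrite big_map.
by move=> q /mapP[q' /hl h ->]; apply: map_f.
Qed.

Lemma card_lin_indep_span_fam (F : fieldType) (V : lmodType F) (Y : eqType)
    (G : Y -> V) (Z : set Y) (I : set V) :
  lin_indep I -> I `<=` span_fam G Z -> (I #<= tagged_seqs Z)%card.
Proof.
(* Only finitely many vectors of [I] share a finite support [supp v], so [v] is
   determined by [supp v] and its position among them. *)
move=> hI hIZ.
have hs v : exists s : seq Y, I v -> (forall y, y \in s -> Z y) /\ span_fam G [set` s] v.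
  case: (pselect (I v)) => Iv; last by exists [::].
  have [l [hl ev]] := hIZ v Iv; exists (map snd l) => _; split.
    by move=> y /mapP[q /hl ? ->].
  by exists l; split => // q ql; apply: map_f.
have [supp hsupp] := choice hs.
pose E s0 := [set v | I v /\ supp v = s0].
have finE s0 : finite_set (E s0).
  apply: (@lin_indep_finite _ _ _ (map G s0)); first by apply: lin_indep_subset hI _ => v [].
  by move=> v [Iv <-]; apply: span_fam_seq; have [] := hsupp v Iv.
apply: (@card_le_inj_on _ _ _ _ (fun v => (supp v, index v (fset_set (E (supp v)))))).
  by move=> v /hsupp[].
move=> v w Iv Iw [e1]; rewrite e1 => e2.
have vin : v \in fset_set (E (supp w)) by rewrite in_fset_set //; apply/mem_set.
have win : w \in fset_set (E (supp w)) by rewrite in_fset_set //; apply/mem_set.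
by rewrite -(nth_index v vin) e2 nth_index.
Qed.

Lemma map_inj_on (T U : eqType) (A : set T) (f : T -> U) (s1 s2 : seq T) :
  (forall x y, A x -> A y -> f x = f y -> x = y) ->
  (forall x, x \in s1 -> A x) -> (forall x, x \in s2 -> A x) ->
  map f s1 = map f s2 -> s1 = s2.
Proof.
move=> hf; elim: s1 s2 => [|x1 s1 IH] [|x2 s2] //= h1 h2 [e1 e2].
rewrite (hf x1 x2 (h1 _ (mem_head _ _)) (h2 _ (mem_head _ _)) e1); congr (_ :: _).
by apply: IH => // x xs; [apply: h1|apply: h2]; rewrite in_cons xs orbT.
Qed.

Lemma card_tagged_seqs_le (Y1 Y2 : eqType) (Z1 : set Y1) (Z2 : set Y2) (y0 : Y2) :
  (Z1 #<= Z2)%card -> (tagged_seqs Z1 #<= tagged_seqs Z2)%card.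
Proof.
move=> /(card_le_inj_onP y0) [f [fZ finj]].
apply: (@card_le_inj_on _ _ _ _ (fun p => (map f p.1, p.2))).
  by move=> p hp y /mapP[y' /hp /fZ ? ->].
move=> [s1 n1] [s2 n2] h1 h2 [e ->]; congr (_, _).
exact: map_inj_on finj h1 h2 e.
Qed.

(** * Well-orders *)

Section WellOrder.
Variables (T : eqType) (R : rel T) (hR : well_order R).

Lemma wo_min (A : set T) : A !=set0 -> exists z, A z /\ forall y, A y -> R z y.
Proof.
move=> [x Ax]; have /hR[z [[Az lb] _]] : nonempty (fun y => `[< A y >]).
  by exists x; rewrite unfold_in; apply/asboolP.
exists z; split=> [|y Ay]; first by move: Az; rewrite unfold_in => /asboolP.
by apply: lb; rewrite unfold_in; apply/asboolP.
Qed.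

Lemma wo_total : total R.
Proof. by move=> x y; apply: (wo_chainW (withinW hR)). Qed.

Lemma wo_refl : reflexive R.
Proof. by move=> x; apply: (wo_chain_reflexive (withinW hR)). Qed.

Lemma wo_anti : antisymmetric R.
Proof. by move=> x y; apply: (wo_chain_antisymmetric (withinW hR)). Qed.

Lemma wo_trans : transitive R.
Proof.
move=> y x z xy yz.
have [|m [hm lb]] := @wo_min (fun w => [\/ w = x, w = y | w = z]).
  by exists x; constructor.
case: hm lb => -> lb; first by apply: lb; constructor 3.
  by rewrite (@wo_anti x y) ?xy ?lb //; constructor.
by rewrite -(@wo_anti y z) ?yz ?lb //; constructor 2.
Qed.

End WellOrder.

Section KeyLex.
Variables (T U : eqType) (key : T -> U) (leU : rel U) (leT : rel T).
Hypotheses (leU_anti : antisymmetric leU) (leU_trans : transitive leU)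
  (leU_total : total leU).
Hypotheses (leT_refl : reflexive leT) (leT_trans : transitive leT) (leT_total : total leT)
  (leT_anti : forall x y, key x = key y -> leT x y -> leT y x -> x = y).

Definition key_lex x y :=
  (leU (key x) (key y) && (key x != key y)) || ((key x == key y) && leT x y).

Lemma key_lex_refl : reflexive key_lex.
Proof. by move=> x; rewrite /key_lex eqxx leT_refl orbT. Qed.

Lemma key_lex_anti : antisymmetric key_lex.
Proof.
move=> x y /andP[]; rewrite /key_lex.
have [e|ne] /= := eqVneq (key x) (key y).
  by rewrite !andbF /= => hxy hyx; apply: leT_anti.
rewrite !andbT !orbF => h1 h2.
by move: ne; rewrite (@leU_anti (key x) (key y)) ?h1 ?h2 ?eqxx.
Qed.

Lemma key_lex_trans : transitive key_lex.
Proof.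
move=> y x z; rewrite /key_lex.
have [exy|nxy] /= := eqVneq (key x) (key y);
have [eyz|nyz] /= := eqVneq (key y) (key z); rewrite ?andbT ?andbF ?orbF /=.
- by rewrite exy eyz eqxx /= andbF /=; apply: leT_trans.
- by rewrite exy nyz /= => _ ->.
- by rewrite -eyz nxy /= => ->.
move=> h1 h2; have h3 : leU (key x) (key z) by apply: leU_trans h1 h2.
have [exz|nxz] := eqVneq (key x) (key z); last by rewrite h3.
by move: nxy; rewrite exz (@leU_anti (key y) (key z)) ?h2 -?exz ?h1 ?eqxx.
Qed.

Lemma key_lex_total : total key_lex.
Proof.
move=> x y; rewrite /key_lex; move: (leT_total x y) (leU_total (key x) (key y)).
by have [e|ne] /= := eqVneq (key x) (key y); rewrite ?andbF ?andbT ?orbF.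
Qed.

Lemma key_lex_min
    (hU : forall A : set U, A !=set0 -> exists z, A z /\ forall y, A y -> leU z y)
    (hT : forall A : set T, A !=set0 -> (forall x y, A x -> A y -> key x = key y) ->
       exists z, A z /\ forall y, A y -> leT z y)
    (A : set T) :
  A !=set0 -> exists z, A z /\ forall y, A y -> key_lex z y.
Proof.
move=> [x0 Ax0].
have [_ [[x1 Ax1 <-] lbU]] := hU (key @` A) (ex_intro _ _ (ex_intro2 _ _ x0 Ax0 erefl)).
have [z [[Az kz] lbT]] : exists z, (A z /\ key z = key x1) /\
    forall y, A y /\ key y = key x1 -> leT z y.
  by apply: hT => [|x y [_ ->] [_ ->]] //; exists x1.
exists z; split => // y Ay; rewrite /key_lex kz.
have [e|ne] /= := eqVneq (key x1) (key y); first by rewrite lbT ?orbT.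
by rewrite lbU //; exists y.
Qed.

End KeyLex.

Fact total_display : Order.disp_t. Proof. exact: Order.Disp tt tt. Qed.

Section TotalOrderType.
Variables (T : choiceType) (le : rel T) (le_refl : reflexive le)
  (le_anti : antisymmetric le) (le_trans : transitive le) (le_total : total le).

(* The order axioms are phantom arguments, so that the alias determines the order. *)
Definition total_order_type of reflexive le & antisymmetric le & transitive le & total le
  : Type := T.
Local Notation tT := (total_order_type le_refl le_anti le_trans le_total).
HB.instance Definition _ := Choice.on tT.
HB.instance Definition _ :=
  @Order.Le_isPOrder.Build total_display tT le le_refl le_anti le_trans.
HB.instance Definition _ := @Order.POrder_isTotal.Build total_display tT le_total.

End TotalOrderType.

Lemma well_ordered_wf (d : Order.disp_t) (D : orderType d) :
  well_ordered D -> well_founded (fun a b : D => (a < b)%O).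
Proof.
move=> hD a; apply: contrapT => na.
have [m [nm lb]] := hD (fun a => ~ Acc (fun a b : D => (a < b)%O) a) (ex_intro _ a na).
apply: nm; constructor => b hb; apply: contrapT => nb.
by have := lb b nb; rewrite leNgt hb.
Qed.

(** * Words *)

Definition letter_in (K : Type) (S : set K) (e : nat + K) : Prop :=
  forall k, e = inr k -> S k.

(* Only the letters [inr k] are constrained; the numbers [inl n] leave room for
   encodings. *)
Definition words (K : eqType) (S : set K) : set (seq (nat + K)) :=
  [set w | forall k, inr k \in w -> S k].

Lemma wordsP (K : eqType) (S : set K) w e : words S w -> e \in w -> letter_in S e.
Proof. by move=> hw ew k ek; apply: hw; rewrite -ek. Qed.

Lemma words_mono (K : eqType) (S S' : set K) : S `<=` S' -> words S `<=` words S'.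
Proof. by move=> SS' w hw k /hw /SS'. Qed.

Lemma card_words_map (K1 K2 : eqType) (S1 : set K1) (S2 : set K2)
    (g : nat + K1 -> nat + K2) :
  (forall e1 e2, letter_in S1 e1 -> letter_in S1 e2 -> g e1 = g e2 -> e1 = e2) ->
  (forall e, letter_in S1 e -> letter_in S2 (g e)) ->
  (words S1 #<= words S2)%card.
Proof.
move=> g_inj gS; apply: (@card_le_inj_on _ _ _ _ (map g)).
  by move=> w hw k /mapP[e ew /esym]; apply/gS/(wordsP hw).
elim=> [|e1 w1 IH] [|e2 w2] //= h1 h2 [e12 w12]; congr (_ :: _).
  by apply: g_inj e12; [apply: wordsP h1 _|apply: wordsP h2 _]; rewrite mem_head.
by apply: IH w12 => k kw; [apply: h1|apply: h2]; rewrite in_cons kw orbT.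
Qed.

Lemma countable_words0 (K : eqType) : countable (words (@set0 K)).
Proof.
apply: (@sub_countable _ _ _ (words (@set0 nat))); last first.
  apply: (@sub_countable _ _ _ [set: seq (nat + nat)]); first exact: card_leT.
  exact: countableP.
apply: (card_words_map (g := fun e => if e is inl n then inl n else inl 0%N)).
  move=> [n1|k1] [n2|k2] h1 h2; [by case=> ->|by case: (h2 k2)|by case: (h1 k1)..].
by move=> [n|k] hk k' //=; case: (hk k).
Qed.

Lemma card_words_setD1 (K : eqType) (S : set K) (d : K) :
  (words S #<= words (S `\ d))%card.
Proof.
apply: (card_words_map (g := fun e =>
  match e with inl n => inl n.+1 | inr k => if k == d then inl 0%N else inr k end)).
  move=> [n1|k1] [n2|k2] _ _ //=; first by case=> ->.
  - by case: eqP.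
  - by case: eqP.
  - by case: eqP => [->|_]; case: eqP => [->|_] // [->].
move=> [n|k] hk k' //=; case: eqP => // kd [<-].
by split; [apply: hk|move=> /= kd'; apply: kd].
Qed.

Section ConcatWords.
Variable K : eqType.

Definition concat_words (ws : seq (seq (nat + K))) : seq (nat + K) :=
  flatten (map (fun w => inl (size w) :: w) ws).

Lemma concat_words_inj : injective concat_words.
Proof.
elim=> [|w1 ws1 IH] [|w2 ws2] //= [e1] /eqP; rewrite eqseq_cat // => /andP[/eqP e2 /eqP e3].
by rewrite e2 (IH _ e3).
Qed.

Lemma mem_concat_words k ws :
  inr k \in concat_words ws -> exists2 w, w \in ws & inr k \in w.
Proof.
elim: ws => [|w ws IH] //=; rewrite in_cons => /orP[//|]; rewrite mem_cat => /orP[kw|].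
  by exists w; rewrite ?mem_head.
by case/IH => w' w'in kw'; exists w'; rewrite ?in_cons ?w'in ?orbT.
Qed.

Lemma card_tagged_seqs_words (S : set K) : (tagged_seqs (words S) #<= words S)%card.
Proof.
apply: (@card_le_inj_on _ _ _ _ (fun p => inl p.2 :: concat_words p.1)).
  move=> p hp k; rewrite in_cons /= => /mem_concat_words [w win kw].
  exact: hp win k kw.
by move=> [p1 p2] [q1 q2] _ _ [-> /concat_words_inj ->].
Qed.

End ConcatWords.

Section SubAlphabet.
Variables (K : eqType) (P : pred K).

Lemma card_words_val (S : set {k | P k}) : (words S #<= words (val @` S))%card.
Proof.
apply: (card_words_map (g := fun e =>
  match e with inl n => inl n | inr k => inr (val k) end)).
  move=> [n1|k1] [n2|k2] _ _ //=; first by case=> ->.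
  by case=> e; rewrite (val_inj e).
by move=> [n|k] hk k' //= [<-]; exists k => //; apply: hk.
Qed.

Lemma card_words_insub : (words [set k | P k] #<= words [set: {k | P k}])%card.
Proof.
apply: (card_words_map (g := fun e => match e with inl n => inl n
  | inr k => if insub k is Some k' then inr k' else inl 0%N end)) => //.
move=> [n1|k1] [n2|k2] h1 h2 //=; first by case=> ->.
- by rewrite (insubT P (h2 k2 erefl)).
- by rewrite (insubT P (h1 k1 erefl)).
by rewrite (insubT P (h1 k1 erefl)) (insubT P (h2 k2 erefl)) => -[->].
Qed.

End SubAlphabet.

(** * The index set *)

Section IndexOrder.
Variables (K : choiceType) (R : rel K) (hR : well_order R).

Definition opt_le (o o' : option K) :=
  match o, o' with None, _ => true | Some _, None => false | Some a, Some b => R a b end.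

Lemma opt_le_refl : reflexive opt_le.
Proof. by case=> //= a; apply: (wo_refl hR). Qed.

Lemma opt_le_anti : antisymmetric opt_le.
Proof. by case=> [a|] [b|] //= /(wo_anti hR) ->. Qed.

Lemma opt_le_trans : transitive opt_le.
Proof. by case=> [b|] [a|] [c|] //=; apply: (wo_trans hR). Qed.

Lemma opt_le_total : total opt_le.
Proof. by case=> [a|] [b|] //=; apply: (wo_total hR). Qed.

Lemma opt_le_min (A : set (option K)) :
  A !=set0 -> exists z, A z /\ forall y, A y -> opt_le z y.
Proof.
move=> [o0 Ao0]; have [AN|nAN] := pselect (A None); first by exists None.
case: o0 Ao0 => [k0|//] Ak0.
have [k [Ak lb]] := wo_min hR (ex_intro (fun k => A (Some k)) k0 Ak0).
by exists (Some k); split => // -[k'|] //=; apply: lb.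
Qed.

Definition opt_max o o' := if opt_le o o' then o' else o.

Lemma opt_max_l o o' : opt_le o (opt_max o o').
Proof. by rewrite /opt_max; case: ifP => // _; apply: opt_le_refl. Qed.

Lemma opt_max_r o o' : opt_le o' (opt_max o o').
Proof.
rewrite /opt_max; case: ifP => h; first exact: opt_le_refl.
by have := opt_le_total o o'; rewrite h.
Qed.

Definition max_letter (w : seq (nat + K)) : option K :=
  foldr (fun e o => if e is inr k then opt_max (Some k) o else o) None w.

Lemma max_letterP k w : inr k \in w -> exists m, max_letter w = Some m /\ R k m.
Proof.
elim: w => [|e w IH] //=; rewrite in_cons => /orP[/eqP <-|/IH[m [hm km]]].
  by case: (opt_max _ _) (opt_max_l (Some k) (max_letter w)) => // m h; exists m.
case: e => [n|k']; first by exists m.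
case: (opt_max _ _) (opt_max_r (Some k') (max_letter w)) => [m'|]; rewrite hm // => h.
by exists m'; split => //; apply: (wo_trans hR) km h.
Qed.

Let R2 := sval (well_ordering_principle (seq (nat + K))).
Let hR2 : well_order R2 := svalP (well_ordering_principle _).

(* Words are compared first by their largest letter, so that the words below a
   word with largest letter [k] only use letters [R]-below [k]. *)
Definition word_le : rel (seq (nat + K)) := key_lex max_letter opt_le R2.

Lemma word_le_refl : reflexive word_le.
Proof. exact/key_lex_refl/(wo_refl hR2). Qed.

Lemma word_le_anti : antisymmetric word_le.
Proof.
apply: (key_lex_anti opt_le_anti) => x y _ h1 h2.
by apply: (wo_anti hR2); rewrite h1 h2.
Qed.

Lemma word_le_trans : transitive word_le.
Proof. exact: key_lex_trans opt_le_anti opt_le_trans (wo_trans hR2). Qed.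

Lemma word_le_total : total word_le.
Proof. exact: key_lex_total opt_le_total (wo_total hR2). Qed.

Lemma word_le_min (A : set (seq (nat + K))) :
  A !=set0 -> exists z, A z /\ forall y, A y -> word_le z y.
Proof. by apply: (key_lex_min opt_le_min) => A' hA' _; apply: (wo_min hR2). Qed.

Lemma word_le_max_letter t t' : word_le t t' -> opt_le (max_letter t) (max_letter t').
Proof.
rewrite /word_le /key_lex => /orP[/andP[]//|/andP[/eqP -> _]].
exact: opt_le_refl.
Qed.

Definition index_le : rel (seq (nat + K) * nat) :=
  key_lex fst word_le (fun p q => (p.2 <= q.2)%N).

Lemma index_le_refl : reflexive index_le.
Proof. by apply: key_lex_refl => p; apply: leqnn. Qed.

Lemma index_le_anti : antisymmetric index_le.
Proof.
apply: (key_lex_anti word_le_anti) => -[x1 n1] [x2 n2] /= -> h1 h2.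
by congr (_, _); apply/eqP; rewrite eqn_leq h1.
Qed.

Lemma index_le_trans : transitive index_le.
Proof. exact: key_lex_trans word_le_anti word_le_trans (fun q p r => @leq_trans _ _ _). Qed.

Lemma index_le_total : total index_le.
Proof. exact: key_lex_total word_le_total (fun p q => leq_total _ _). Qed.

Definition index_order :=
  total_order_type index_le_refl index_le_anti index_le_trans index_le_total.

Lemma index_leE (a b : index_order) : (a <= b)%O = index_le a b.
Proof. by []. Qed.

Lemma index_well_ordered : well_ordered index_order.
Proof.
apply: (key_lex_min word_le_min) => A [p0 Ap0] _.
have exn : exists n, `[< exists p, A p /\ p.2 = n >] by exists p0.2; apply/asboolP; exists p0.
case: (ex_minnP exn) => m /asboolP [p [Ap pm]] lbm.
exists p; split => // q Aq; rewrite pm; apply: lbm.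
by apply/asboolP; exists q.
Qed.

Definition word_lt t t' := word_le t t' && (t != t').

Lemma word_lt_nil t k : inr k \in t -> word_lt [::] t.
Proof.
move=> kt; have [m [hm _]] := max_letterP kt.
by rewrite /word_lt /word_le /key_lex hm /=; case: t kt {hm}.
Qed.

Lemma index_le_word (p q : index_order) : (p <= q)%O -> word_le p.1 q.1.
Proof.
rewrite index_leE /index_le /key_lex => /orP[/andP[]//|/andP[/eqP -> _]].
exact: word_le_refl.
Qed.

Lemma index_lt_succ t n : (((t, n) : index_order) < ((t, n.+1) : index_order))%O.
Proof.
rewrite lt_neqAle index_leE /index_le /key_lex /= eqxx /= andbF /= leqnSn andbT.
by apply/eqP => -[] /eqP; rewrite eqn_leq ltnn andbF.
Qed.

Lemma index_lt_word t t' n m :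
  word_lt t t' -> (((t, n) : index_order) < ((t', m) : index_order))%O.
Proof.
move=> /andP[h1 h2]; rewrite lt_neqAle index_leE /index_le /key_lex /= h1 h2 /=.
by apply/andP; split => //; apply: contra h2 => /eqP [->].
Qed.

Lemma index_lt_0 (p : index_order) t : (p < ((t, 0%N) : index_order))%O -> word_lt p.1 t.
Proof.
rewrite lt_neqAle index_leE /index_le /key_lex /= => /andP[ne /orP[//|/andP[/eqP e]]].
by rewrite leqn0 => /eqP e2; move: ne; case: p e e2 => /= t1 n1 -> ->; rewrite eqxx.
Qed.

End IndexOrder.

(** * The stratification *)

Section PolyAction.
Variables (F : fieldType) (V : lmodType F) (u : V -> V).

Lemma peval_widen (p : {poly F}) x n : (size p <= n)%N ->
  peval u p x = \sum_(i < n) p`_i *: iter i u x.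
Proof.
move=> hn; rewrite /peval (big_ord_widen n (fun i => p`_i *: iter i u x) hn).
rewrite big_mkcond; apply: eq_bigr => i _; case: ifP => // /negbT.
by rewrite -leqNgt => /(nth_default 0) ->; rewrite scale0r.
Qed.

Lemma peval0 x : peval u 0 x = 0.
Proof. by rewrite /peval size_poly0 big_ord0. Qed.

Lemma pevalD p q x : peval u (p + q) x = peval u p x + peval u q x.
Proof.
pose n := maxn (size p) (size q).
rewrite (@peval_widen _ _ n) ?(leq_trans (size_polyD _ _)) //.
rewrite (@peval_widen p _ n) ?leq_maxl // (@peval_widen q _ n) ?leq_maxr //.
by rewrite -big_split; apply: eq_bigr => i _; rewrite coefD scalerDl.
Qed.

Lemma pevalZ c p x : peval u (c *: p) x = c *: peval u p x.
Proof.
rewrite (@peval_widen _ _ (size p)) ?size_scale_leq // /peval scaler_sumr.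
by apply: eq_bigr => i _; rewrite coefZ scalerA.
Qed.

Lemma pevalXn k x : peval u 'X^k x = iter k u x.
Proof.
rewrite /peval size_polyXn big_ord_recr /= coefXn eqxx scale1r big1 ?add0r //.
by move=> i _; rewrite coefXn (ltn_eqF (ltn_ord i)) scale0r.
Qed.

Lemma peval_sum_monomials (I : Type) (r : seq I) (P : pred I) (c : I -> F)
    (k : I -> nat) x :
  peval u (\sum_(i <- r | P i) c i *: 'X^(k i)) x =
  \sum_(i <- r | P i) c i *: iter (k i) u x.
Proof.
rewrite (big_morph (fun p => peval u p x) (fun p q => pevalD p q x) (peval0 x)).
by apply: eq_bigr => i _; rewrite pevalZ pevalXn.
Qed.

End PolyAction.

Definition letters_below (K : eqType) (R : rel K) (o : option K) : set K :=
  if o is Some d then [set k | R k d] else set0.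

Lemma word_le_words (K : choiceType) (R : rel K) (hR : well_order R) t t' :
  word_le R t t' -> words (letters_below R (max_letter R t')) t.
Proof.
move=> /(@word_le_max_letter _ _ hR) hle k /(max_letterP hR) [m [hm km]].
move: hle; rewrite hm; case: (max_letter R t') => [d|] //= md.
exact: (wo_trans hR km md).
Qed.

Section Construction.
Variables (F : fieldType) (V : lmodType F) (u : {linear V -> V}) (B : set V).
Hypothesis hB : Defs.basis_of setT B.
Variable T : F -> set V.
Hypothesis card_range : forall (Y : eqType) (g : Y -> V) (Z : set Y) (l : F),
  (forall x, span_fam g Z (u x - l *: x)) -> (T l #<= tagged_seqs Z)%card.
Variables (K : choiceType) (R : rel K) (hR : well_order R) (k0 : K).
Hypothesis small_segments : forall k l, ~ (T l #<= words [set k' | R k' k])%card.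
Variable code : V -> seq (nat + K).
Hypotheses (code_inj : forall b b', B b -> B b' -> code b = code b' -> b = b')
  (code_letter : forall b, B b -> exists k, inr k \in code b).

Local Notation D := (index_order hR).

Definition orbit (gen : D -> V) (q : D * nat) : V := iter q.2 u (gen q.1).

Definition span_below (gen : D -> V) (a : D) : set V :=
  span_fam (orbit gen) [set q | (q.1 < a)%O].

Definition is_limit (a : D) : Prop := a.2 = 0%N /\ exists t, word_lt R t a.1.

Definition next_gen (a : D) (N : set V) : V :=
  if pselect (is_limit a) then
    if pselect (exists b, B b /\ code b = a.1 /\ ~ N b)
    then xget 0 (fun b => B b /\ code b = a.1 /\ ~ N b)
    else xget 0 (fun y => ~ N y)
  else xget 0 (fun y => forall c1 c2 : F, N (c1 *: y + c2 *: u y) -> c1 = 0 /\ c2 = 0).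

Definition gen_rec (a : D) (h : forall b : D, (b < a)%O -> V) : V :=
  next_gen a (span_below (fun b => if pselect (b < a)%O is left pf then h b pf else 0) a).

Definition gen : D -> V :=
  Fix (well_ordered_wf (index_well_ordered (hR := hR))) (fun _ => V) gen_rec.

Definition strat (a : D) : set V := span_fam (orbit gen) [set q | (q.1 <= a)%O].

Lemma gen_eq a : gen a = next_gen a (span_below gen a).
Proof.
rewrite /gen Fix_eq.
  rewrite /gen_rec; congr (next_gen a _); apply: eq_span_fam => q /= hq.
  by rewrite /orbit; case: pselect.
move=> x f g hfg; rewrite /gen_rec; congr (next_gen x (span_below _ x)); apply: funext => b.
by case: pselect => // pf; apply: hfg.
Qed.

Lemma span_orbit_submodule (Z : set (D * nat)) : (forall q, Z q -> Z (q.1, q.2.+1)) ->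
  submodule u (span_fam (orbit gen) Z).
Proof.
move=> hZ; have hS := span_fam_subspace (orbit gen) Z.
split; first exact: subspace0 hS.
split; first exact: subspaceD hS.
split; first exact: subspaceZ hS.
move=> x [l [hl ->]]; exists (map (fun q => (q.1, (q.2.1, q.2.2.+1))) l); split.
  by move=> q /mapP[q' /hl h ->]; apply: hZ.
by rewrite linear_sum big_map; apply: eq_bigr => q _; rewrite linearZ.
Qed.

Lemma span_below_subspace a : subspace (span_below gen a).
Proof. exact: span_fam_subspace. Qed.

Lemma span_below_u a x : span_below gen a x -> span_below gen a (u x).
Proof.
by case: (span_orbit_submodule (Z := [set q | (q.1 < a)%O]) (fun _ => id)) => _ [_ [_]]; apply.
Qed.

Lemma strat_submodule a : submodule u (strat a).
Proof. exact: span_orbit_submodule. Qed.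

Lemma span_below_strat a : span_below gen a `<=` strat a.
Proof. by apply: span_fam_mono => q /= /ltW. Qed.

Lemma gen_strat a : strat a (gen a).
Proof. exact: (@span_fam_gen _ _ _ (orbit gen) [set q | (q.1 <= a)%O] (a, 0%N) (lexx a)). Qed.

Lemma small_letters o l : ~ (T l #<= words (letters_below R o))%card.
Proof.
case: o => [d|] /= h; first exact: small_segments h.
exact: small_segments k0 l (card_le_trans h (subset_card_le (words_mono (sub0set _)))).
Qed.

Definition tag_index (q : D * nat) : seq (nat + K) := inl q.2 :: inl q.1.2 :: q.1.1.

Lemma tag_index_inj : injective tag_index.
Proof. by move=> [[t1 n1] k1] [[t2 n2] k2] [-> -> ->]. Qed.

(* [span_below gen a] is spanned by fewer vectors than the rank of [u - l]. *)
Lemma range_not_below a l : ~ (forall x, span_below gen a (u x - l *: x)).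
Proof.
move=> /card_range h; apply: (small_letters (o := max_letter R a.1) (l := l)).
apply: (card_le_trans h); apply: (card_le_trans _ (card_tagged_seqs_words _)).
apply: (card_tagged_seqs_le [::]).
apply: (card_le_inj_on _ (fun x y _ _ => @tag_index_inj x y)).
move=> q /= qa k; rewrite !in_cons /=.
exact: (word_le_words hR (index_le_word (ltW qa)) (k := k)).
Qed.

Lemma exists_not_below a : exists y, ~ span_below gen a y.
Proof.
apply: contrapT => H; apply: (range_not_below (a := a) (l := 0)) => x.
by apply: contrapT => nx; apply: H; exists (u x - 0 *: x).
Qed.

Lemma exists_free_pair_below a : exists y, forall c1 c2 : F,
  span_below gen a (c1 *: y + c2 *: u y) -> c1 = 0 /\ c2 = 0.
Proof.
apply: (exists_free_pair_mod (span_below_subspace a) (@span_below_u a)).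
by move=> [l hl]; apply: (range_not_below (a := a) (l := l)).
Qed.

Lemma gen_free_pair a : ~ is_limit a -> forall c1 c2 : F,
  span_below gen a (c1 *: gen a + c2 *: u (gen a)) -> c1 = 0 /\ c2 = 0.
Proof.
move=> nl; rewrite gen_eq /next_gen; destruct (pselect (is_limit a)) => //.
exact: (xgetPex 0 (exists_free_pair_below a)).
Qed.

Lemma gen_not_below a : ~ span_below gen a (gen a).
Proof.
have [hl|nl] := pselect (is_limit a); last first.
  move=> hN; have := @gen_free_pair a nl 1 0.
  by rewrite scale1r scale0r addr0 => /(_ hN) [/eqP]; rewrite oner_eq0.
rewrite [X in ~ _ X]gen_eq /next_gen; destruct (pselect (is_limit a)) => //.
destruct (pselect (exists b, _)) as [ex|nex]; last exact: (xgetPex 0 (exists_not_below a)).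
by case: (xgetPex 0 ex) => _ [].
Qed.

Lemma basis_strat b : B b -> strat ((code b, 0%N) : D) b.
Proof.
move=> Bb; set a : D := (code b, 0%N).
have [hb|hb] := pselect (span_below gen a b); first exact: span_below_strat.
have [k kin] := code_letter Bb.
have hl : is_limit a by split => //; exists [::]; apply: word_lt_nil kin.
have ex : exists b', B b' /\ code b' = a.1 /\ ~ span_below gen a b' by exists b.
have [Bb' [eb' _]] := xgetPex 0 ex.
suff -> : b = gen a by apply: gen_strat.
rewrite gen_eq /next_gen; destruct (pselect (is_limit a)) => //.
by destruct (pselect (exists b, _)); last by []; apply: code_inj.
Qed.

Lemma below_strat a : below strat a = span_below gen a.
Proof.
apply/seteqP; split => x.
  move=> [s [f [hs ->]]]; apply: subspace_sum_seq; first exact: span_below_subspace.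
  move=> b /hs[ba Mb]; apply: (span_fam_mono _ Mb) => q /= qb.
  exact: le_lt_trans qb ba.
move=> [l [hl ->]]; exists (undup (map (fun q => q.2.1) l)).
exists (fun b => \sum_(q <- l | q.2.1 == b) q.1 *: orbit gen q.2); split.
  move=> b; rewrite mem_undup => /mapP [q ql ->]; split; first exact: hl.
  apply: subspace_sum; first exact: span_fam_subspace.
  move=> q' /eqP <-; apply: subspaceZ; first exact: span_fam_subspace.
  by apply: span_fam_gen => /=.
exact: big_seq_partition_undup.
Qed.

Lemma strat_exhaustive : sumfam strat (fun _ => True) = setT.
Proof.
apply/seteqP; split => // x _.
have : Defs.span B x by case: hB => _ [_ ->].
rewrite spanE => -[l [hl ->]].
pose lim (p : F * V) : D := (code p.2, 0%N).
exists (undup (map lim l)), (fun d => \sum_(p <- l | lim p == d) p.1 *: p.2); split.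
  move=> d; rewrite mem_undup => /mapP [p pl ->]; split => //.
  rewrite big_seq_cond; apply: subspace_sum; first exact: span_fam_subspace.
  move=> p' /andP[p'l /eqP <-]; apply: subspaceZ; first exact: span_fam_subspace.
  exact: basis_strat (hl p' p'l).
exact: (big_seq_partition_undup l lim (fun p => p.1 *: p.2)).
Qed.

Lemma strat_cyclic a y : strat a y ->
  exists (p : {poly F}) n, below strat a n /\ y = n + peval u p (gen a).
Proof.
move=> [l [hl ->]]; rewrite below_strat.
exists (\sum_(q <- l | ~~ (q.2.1 < a)%O) q.1 *: 'X^(q.2.2)).
exists (\sum_(q <- l | (q.2.1 < a)%O) q.1 *: orbit gen q.2); split.
  apply: subspace_sum; first exact: span_below_subspace.
  move=> q qa; apply: subspaceZ; first exact: span_below_subspace.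
  exact: span_fam_gen.
rewrite peval_sum_monomials (bigID (fun q => (q.2.1 < a)%O)) /=; congr (_ + _).
rewrite big_seq_cond [RHS]big_seq_cond; apply: eq_bigr => q /andP[ql qa].
have := hl q ql; rewrite /= le_eqVlt (negbTE qa) orbF => /eqP e.
by rewrite /orbit e.
Qed.

Lemma strat_stratification : stratification u strat.
Proof.
split.
- exact: strat_submodule.
- by move=> a b ab; apply: span_fam_mono => q /= qa; apply: le_trans qa ab.
- move=> a; exists (gen a); split; first exact: gen_strat.
  by rewrite below_strat; apply: gen_not_below.
- by move=> a; exists (gen a); split; [exact: gen_strat|exact: strat_cyclic].
- exact: strat_exhaustive.
Qed.

Lemma min_succ_not_limit (a : D) : is_min a \/ is_succ a -> ~ is_limit a.
Proof.
case: a => ta na hmin [/= a2 [t ht]]; rewrite a2 in hmin.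
case: hmin => [hm|[b [ba nb]]].
  by have := hm ((t, 0%N) : D); rewrite leNgt (index_lt_word hR 0 0 ht).
have hb := index_lt_0 ba; apply: nb; exists ((b.1, b.2.+1) : D); split.
  by case: b ba hb => t1 n1 /= _ _; apply: index_lt_succ.
exact: index_lt_word.
Qed.

Lemma strat_good : good strat.
Proof.
split=> [a /min_succ_not_limit nl|[t n]]; last first.
  by exists ((t, n.+1) : D); apply: index_lt_succ.
exists (gen a), (u (gen a)); split; first exact: gen_strat.
split; first by case: (strat_submodule a) => _ [_ [_]]; apply; apply: gen_strat.
by move=> c1 c2; rewrite below_strat; apply: gen_free_pair.
Qed.

End Construction.

Lemma good_stratification_of_coding (F : fieldType) (V : lmodType F)
    (u : {linear V -> V}) (B : set V) (T : F -> set V) (K : choiceType) (R : rel K)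
    (code : V -> seq (nat + K)) :
  Defs.basis_of setT B ->
  (forall (Y : eqType) (g : Y -> V) (Z : set Y) (l : F),
    (forall x, span_fam g Z (u x - l *: x)) -> (T l #<= tagged_seqs Z)%card) ->
  well_order R -> K ->
  (forall k l, ~ (T l #<= words [set k' | R k' k])%card) ->
  (forall b b', B b -> B b' -> code b = code b' -> b = b') ->
  (forall b, B b -> exists k, inr k \in code b) ->
  has_good_stratification u.
Proof.
move=> hB hT hR k0 hsmall hinj hletter.
exists total_display, (index_order hR), (strat u B (hR := hR) code).
split; first exact: index_well_ordered.
split; first exact: (strat_stratification hB hT hR k0 hsmall hinj hletter).
exact: (strat_good B hT hR k0 hsmall code).
Qed.

(** * Choosing the alphabet *)

Lemma range_shift_subspace (F : fieldType) (V : lmodType F) (u : {linear V -> V}) (l : F) :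
  subspace (range (fun x => u x - l *: x)).
Proof.
split.
- by exists 0 => //=; rewrite linear0 scaler0 subr0.
- move=> _ _ [x _ <-] [y _ <-]; exists (x + y) => //.
  by rewrite linearD scalerDr opprD addrACA.
- move=> a _ [x _ <-]; exists (a *: x) => //.
  by rewrite linearZ scalerBr !scalerA mulrC.
Qed.

Lemma not_dominant_basis (F : fieldType) (V : lmodType F) (u : {linear V -> V}) (l : F) :
  ~ dominant_eigenvalue u l -> exists T : set V, Defs.span T = setT /\
    forall (Y : eqType) (g : Y -> V) (Z : set Y),
      (forall x, span_fam g Z (u x - l *: x)) -> (T #<= tagged_seqs Z)%card.
Proof.
move=> hnd; have indep0 : lin_indep (@set0 V) by move=> s c _ hs _ v /hs.
have [C [hCb _]] := basis_extend (range_shift_subspace u l) (sub0set _) indep0.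
have [CR [hC _]] := hCb; have subspaceT : subspace (@setT V) by [].
have [T [hTb CT]] := basis_extend subspaceT (subsetT C) hC.
exists T; split => [|Y g Z hZ]; first by case: hTb => _ [].
have TC : (T #<= C)%card.
  apply: contrapT => nTC; apply: hnd; exists C, T.
  by do 2!split => //; split; first exact: subset_card_le.
apply: (card_le_trans TC); apply: card_lin_indep_span_fam => // _ /CR [x _ <-].
exact: hZ.
Qed.

Lemma well_order_val (T : eqType) (R : rel T) (P : pred T) :
  well_order R -> well_order (fun a b : {x | P x} => R (val a) (val b)).
Proof.
move=> hR; apply: antisymmetric_well_order => [a b /(wo_anti hR) /val_inj //|A [a Aa]].
have [_ [[k kA <-] lb]] := wo_min hR (ex_intro (fun v => exists2 k, k \in A & val k = v) _
  (ex_intro2 _ _ a Aa erefl)).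
by exists k; split => // k' k'A; apply: lb; exists k'.
Qed.

(* [P] is the initial segment of [R] playing the role of the initial ordinal of
   [dim V]. *)
Lemma exists_small_segments (V : eqType) (R : rel V) (hR : well_order R) (I : Type)
    (T : I -> set V) (B : set V) :
  (forall i, (B #<= tagged_seqs (T i))%card) -> exists P : pred V,
    (forall v, P v -> forall i, ~ (T i #<= words [set w | R w v])%card) /\
    (B #<= words [set v | P v])%card.
Proof.
move=> hBT.
have [[v0 [i0 big0]]|nbig] := pselect (exists v i, (T i #<= words [set w | R w v])%card);
  last first.
  exists predT; split; first by move=> v _ i h; apply: nbig; exists v, i.
  by apply: (@card_le_inj_on _ _ _ _ (fun v => [:: inr v])) => [//|x y _ _ []].
have [a0 [[i hi] lb]] := wo_min hR
  (ex_intro (fun v => exists i, (T i #<= words [set w | R w v])%card) v0 (ex_intro _ i0 big0)).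
exists (fun v => R v a0 && (v != a0)); split.
  move=> v /andP[va0 vn] j h; move: vn.
  by rewrite (@wo_anti _ _ hR v a0) ?va0 ?(lb v) ?eqxx //; exists j.
apply: (card_le_trans (hBT i)); apply: (card_le_trans (card_tagged_seqs_le [::] hi)).
apply: (card_le_trans (card_tagged_seqs_words _)).
apply: (card_le_trans (card_words_setD1 _ a0)).
by apply: subset_card_le; apply: words_mono => v [/= -> /eqP].
Qed.

Theorem proposition4 (F : fieldType) (V : lmodType F) (u : {linear V -> V}) :
  uncountable_dim V ->
  (forall l : F, ~ dominant_eigenvalue u l) ->
  has_good_stratification u.
Proof.
move=> [B [hB hBc]] hnd.
have [T hT] := choice (fun l => not_dominant_basis (hnd l)).
have [R hR] := well_ordering_principle V.
have hBT l : (B #<= tagged_seqs (T l))%card.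
  apply: (card_lin_indep_span_fam (G := id)); first by case: hB => _ [].
  by rewrite -spanE (hT l).1.
have [P [hPsmall hBP]] := exists_small_segments hR hBT.
have [v0 Pv0] : exists v, P v.
  apply: contrapT => nP; apply/hBc/(sub_countable hBP).
  suff -> : [set v | P v] = set0 by apply: countable_words0.
  by apply/seteqP; split => v //= Pv; apply: nP; exists v.
have [code [_ code_inj]] := card_le_inj_onP [::] (card_le_trans hBP (card_words_insub P)).
pose k0 : {v | P v} := exist _ v0 Pv0.
(* Prefixing [k0] makes every [(code b, 0)] a limit index. *)
apply: (@good_stratification_of_coding _ _ u B T _ (fun a b => R (val a) (val b))
  (fun b => inr k0 :: code b) hB) => //.
- by move=> Y g Z l; apply: (hT l).2.
- exact: well_order_val.
- move=> k l h; apply: (hPsmall _ (valP k) l).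
  apply: (card_le_trans h (card_le_trans (card_words_val _) _)).
  by apply: subset_card_le; apply: words_mono => _ [k' /= hk' <-].
- by move=> b b' Bb Bb' [/(code_inj _ _ Bb Bb')].
- by move=> b _; exists k0; rewrite mem_head.
Qed.
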